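(* Let $n\ge2$ and let $H_{n,n}$ be the half-graph with vertex set $\{u_1,\dots,u_n\}\cup\{v_1,\dots,v_n\}$ in which $u_i$ is adjacent to $v_j$ exactly when $j\ge i$ (and there are no other edges). Then $\chi_{\mathrm{so}}(H_{n,n})=n+1$ and $\alpha_{\mathrm{od}}(H_{n,n})=2$, and every odd independent set of $H_{n,n}$ with at least two vertices has the form $\{v_i,u_j\}$ with $i<j$.
   Context: An odd independent set in $G=(V,E)$ is an independent set $S$ such that every $v\in V\setminus S$ has either no neighbor or an odd number of neighbors in $S$; $\alpha_{\mathrm{od}}(G)$ is its maximum size. A strong odd coloring is a proper coloring such that for each vertex $v$ every color on $N(v)$ occurs an odd number of times on $N(v)$; $\chi_{\mathrm{so}}(G)$ is the minimum number of colors. *)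

From mathcomp Require Import all_boot.
Set Implicit Arguments. Unset Strict Implicit. Unset Printing Implicit Defensive.

Section Graphs.
Variable T : finType.
Variable e : rel T.

Definition nbrs_in (v : T) (S : {set T}) : {set T} := [set w in S | e v w].

Definition independent (S : {set T}) : bool :=
  [forall x in S, forall y in S, ~~ e x y].

Definition odd_independent (S : {set T}) : bool :=
  independent S &&
  [forall v, (v \notin S) ==> ((#|nbrs_in v S| == 0) || odd #|nbrs_in v S|)].

Definition alpha_od : nat := \max_(S : {set T} | odd_independent S) #|S|.

Definition strong_odd_coloring (k : nat) (c : T -> 'I_k) : bool :=
  [forall x, forall y, e x y ==> (c x != c y)] &&
  [forall v, forall a : 'I_k,
     let m := #|[set w | e v w & c w == a]| in (m == 0) || odd m].

Definition has_so_coloring (k : nat) : bool :=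
  [exists c : {ffun T -> 'I_k}, strong_odd_coloring c].

(* minimum number of colours; a loopless graph always admits one with #|T|
   colours, so the minimum ranges over k <= #|T| (default #|T|.+1 otherwise) *)
Definition chi_so : nat :=
  \big[minn/#|T|.+1]_(k < #|T|.+1 | has_so_coloring k) k.
End Graphs.

(* Half-graph H_{n,n}: inl i = u_{i+1}, inr j = v_{j+1};
   u_i ~ v_j iff j >= i. *)
Definition half_graph_rel (n : nat) : rel (sum 'I_n 'I_n) :=
  fun x y =>
    match x, y with
    | inl i, inr j => (i <= j)%N
    | inr j, inl i => (i <= j)%N
    | _, _ => false
    end.
Arguments half_graph_rel n : clear implicits.

(* As u_i is adjacent to v_i, ..., v_n, the neighbourhood of u_i
   is that of u_{i+1} plus v_i; in a strong odd colouring the colour of v_i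
   then cannot occur on v_{i+1}, ..., v_n, since its two counts would differ
   by one.  So the v_j get n distinct colours, and u_1, adjacent to all of
   them, needs one more.  Conversely u_i |-> i, v_j |-> j+1 is proper and
   injective on every neighbourhood, since each neighbourhood lies on one side.
   If an odd independent set S contained two u's, with u_b1, u_b2 the two of
   smallest index, then v_b2 would have exactly the two neighbours u_b1, u_b2
   in S; the automorphism u_i <-> v_(n+1-i) excludes two v's in the same way.
   So S has at most one vertex on each side, and independence forces the
   shape {v_i, u_j} with i < j. *)

From mathcomp Require Import all_boot.
Set Implicit Arguments. Unset Strict Implicit. Unset Printing Implicit Defensive.

Lemma bigmin_leq (I : eqType) (r : seq I) (P : pred I) (F : I -> nat) d i :
  i \in r -> P i -> \big[minn/d]_(j <- r | P j) F j <= F i.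
Proof.
elim: r => // j r IHr; rewrite inE big_cons => /orP[/eqP <- ->|ir Pi].
  exact: geq_minl.
by case: ifP => _; rewrite ?geq_min IHr ?orbT.
Qed.

Lemma ord_two_smallest n (A : {set 'I_n}) :
  1 < #|A| -> exists b1 b2 : 'I_n, b1 < b2 /\ [set i in A | i <= b2] = [set b1; b2].
Proof.
case/card_gt1P => x [y [xA yA xy]].
case: (arg_minnP val xA) => b1 b1A b1_min.
have [z zA] : exists z, z \in A :\ b1.
  case: (eqVneq x b1) => [xb1|xb1]; last by exists x; rewrite !inE xb1.
  by exists y; rewrite !inE -xb1 eq_sym xy.
case: (arg_minnP val zA) => b2 /setD1P[b2b1 b2A] b2_min.
have lt_b1b2 : b1 < b2 by rewrite ltn_neqAle b1_min // andbT (inj_eq val_inj) eq_sym.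
exists b1, b2; split=> //; apply/setP => i; rewrite !inE.
have [->|ib1] := eqVneq i b1; first by rewrite (ltnW lt_b1b2) andbT; apply: b1A.
apply/andP/eqP => [[iA le_ib2]|->]; last by rewrite b2A.
by apply/val_inj/eqP; rewrite eqn_leq le_ib2 b2_min //; apply/setD1P.
Qed.

Section Graph.
Variables (T : finType) (e : rel T).

Lemma odd_independent_indep S x y :
  odd_independent e S -> x \in S -> y \in S -> ~~ e x y.
Proof.
by rewrite /odd_independent /independent => /andP[/forall_inP indS _] /indS/forall_inP; apply.
Qed.

Lemma odd_independent_odd S v :
  odd_independent e S -> v \notin S -> 0 < #|nbrs_in e v S| -> odd #|nbrs_in e v S|.
Proof. by case/andP=> _ /forallP/(_ v)/implyP oddS /oddS/orP[/eqP ->|]. Qed.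

Lemma odd_independent_preimset (f : T -> T) S :
  injective f -> {mono f : x y / e x y} ->
  odd_independent e S -> odd_independent e (f @^-1: S).
Proof.
move=> injf fe oS; apply/andP; split.
  apply/forall_inP => x; rewrite inE => xS; apply/forall_inP => y; rewrite inE => yS.
  by rewrite -fe (odd_independent_indep oS).
apply/forallP => v; apply/implyP; rewrite inE => vS.
have -> : nbrs_in e v (f @^-1: S) = f @^-1: nbrs_in e (f v) S.
  by apply/setP => w; rewrite !inE fe.
rewrite card_preimset //; have [->|pos] := posnP #|nbrs_in e (f v) S| => //.
by rewrite (odd_independent_odd oS vS pos) orbT.
Qed.

Lemma alpha_od_eq a :
  (exists2 S, odd_independent e S & #|S| = a) ->
  (forall S, odd_independent e S -> #|S| <= a) -> alpha_od e = a.
Proof.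
case=> S0 oS0 <- maxS; apply/eqP; rewrite eqn_leq; apply/andP; split.
  exact/bigmax_leqP.
exact: (leq_bigmax_cond _ oS0).
Qed.

Lemma strong_odd_coloring_proper k (c : T -> 'I_k) x y :
  strong_odd_coloring e c -> e x y -> c x != c y.
Proof. by case/andP=> /forallP/(_ x)/forallP/(_ y)/implyP. Qed.

Lemma strong_odd_coloring_nbhd_inj k (c : T -> 'I_k) :
  (forall x y, e x y -> c x != c y) ->
  (forall v, {in [set w | e v w] &, injective c}) -> strong_odd_coloring e c.
Proof.
move=> proper injc; apply/andP; split.
  by apply/forallP => x; apply/forallP => y; apply/implyP/proper.
apply/forallP => v; apply/forallP => a /=.
suff : #|[set w | e v w & c w == a]| <= 1 by case: #|_| => [|[]].
apply/card_le1_eqP => x y; rewrite !inE => /andP[vx /eqP cx] /andP[vy /eqP cy].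
by apply: (injc v); rewrite ?inE // cx cy.
Qed.

(* The colour of y occurs on N(x) once more than on N(x'), and two consecutive
   counts can both be zero-or-odd only if the smaller one is zero. *)
Lemma strong_odd_coloring_nested k (c : T -> 'I_k) x x' y z :
  strong_odd_coloring e c ->
  [set w | e x w] = y |: [set w | e x' w] -> ~~ e x' y -> e x' z -> c z != c y.
Proof.
case/andP=> _ /forallP soc Nx x'y x'z; apply/eqP => czy.
have /forallP/(_ (c y)) /= := soc x; have /forallP/(_ (c y)) /= := soc x'.
have -> : [set w | e x w & c w == c y] = y |: [set w | e x' w & c w == c y].
  apply/setP => w; move/setP/(_ w): Nx; rewrite !inE => ->.
  by case: eqVneq => [->|]; rewrite ?eqxx.
rewrite cardsU1 inE (negbTE x'y) /=.
have : 0 < #|[set w | e x' w & c w == c y]|.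
  by apply/card_gt0P; exists z; rewrite inE x'z czy eqxx.
by case: #|_| => [|m] //=; case: (odd m).
Qed.

Lemma chi_so_eq k :
  k <= #|T| -> has_so_coloring e k ->
  (forall k', has_so_coloring e k' -> k <= k') -> chi_so e = k.
Proof.
rewrite -ltnS => k_lt col_k min_k; apply/eqP; rewrite eqn_leq; apply/andP; split.
  exact: (@bigmin_leq _ _ _ _ _ (Ordinal k_lt)) (mem_index_enum _) col_k.
apply: (big_ind (fun m => k <= m)) => [|m m' km km'|k' /min_k //].
  exact: ltnW.
by rewrite leq_min km km'.
Qed.

End Graph.

Section HalfGraph.
Variable n : nat.
Local Notation e := (half_graph_rel n).
Local Notation V := ('I_n + 'I_n)%type.

Lemma half_graph_nbhd_inl (i i' : 'I_n) :
  i' = i.+1 :> nat -> [set w | e (inl i) w] = inr i |: [set w | e (inl i') w].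
Proof.
move=> i'E; apply/setP => -[k|k]; rewrite !inE //= i'E leq_eqVlt.
by rewrite (inj_eq val_inj) eq_sym.
Qed.

Lemma half_graph_so_coloring_gt k (c : V -> 'I_k) :
  0 < n -> strong_odd_coloring e c -> n < k.
Proof.
move=> n_gt0 soc; have v_new (i j : 'I_n) : i < j -> c (inr j) != c (inr i).
  move=> ij; pose i' : 'I_n := Ordinal (leq_ltn_trans ij (ltn_ord j)).
  apply: (strong_odd_coloring_nested (x := inl i) (x' := inl i') soc).
  - exact: half_graph_nbhd_inl.
  - by rewrite /= ltnn.
  - exact: ij.
have inj_v : injective (c \o inr).
  move=> i j /= cij; case: (ltngtP i j) => [ij|ji|/val_inj //].
    by move: (v_new _ _ ij); rewrite cij eqxx.
  by move: (v_new _ _ ji); rewrite cij eqxx.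
pose u0 : 'I_n := Ordinal n_gt0.
have u0_new (j : 'I_n) : c (inl u0) != c (inr j) by apply: strong_odd_coloring_proper soc _.
pose f (o : option 'I_n) : 'I_k := oapp (c \o inr) (c (inl u0)) o.
have inj_f : injective f.
  case=> [i|] [j|] //= cij; first by rewrite (inj_v _ _ cij).
    by move: (u0_new i); rewrite cij eqxx.
  by move: (u0_new j); rewrite cij eqxx.
by have := leq_card f inj_f; rewrite card_option !card_ord.
Qed.

Definition half_graph_coloring (x : V) : 'I_n.+1 :=
  match x with inl i => widen_ord (leqnSn n) i | inr j => lift ord0 j end.

Lemma half_graph_has_so_coloring : has_so_coloring e n.+1.
Proof.
apply/existsP; exists [ffun x => half_graph_coloring x].
apply: strong_odd_coloring_nbhd_inj => [[i|i] [j|j]|[i|i] [j|j] [k|k]] //=;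
  rewrite ?inE !ffunE //=.
- by move=> ij; rewrite -(inj_eq val_inj) /= neq_ltn ltnS ij.
- by move=> ji; rewrite -(inj_eq val_inj) /= neq_ltn ltnS ji orbT.
- by move=> _ _ /lift_inj ->.
- by move=> _ _ /(congr1 val) /= /val_inj ->.
Qed.

Lemma half_graph_chi_so : 0 < n -> chi_so e = n.+1.
Proof.
move=> n_gt0; apply: chi_so_eq half_graph_has_so_coloring _.
  by rewrite card_sum !card_ord -addn1 leq_add2l.
by move=> k /existsP[c /(half_graph_so_coloring_gt n_gt0)].
Qed.

Definition half_graph_flip (x : V) : V :=
  match x with inl i => inr (rev_ord i) | inr j => inl (rev_ord j) end.

Lemma half_graph_flipK : involutive half_graph_flip.
Proof. by case=> i /=; rewrite rev_ordK. Qed.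

Lemma half_graph_flip_mono : {mono half_graph_flip : x y / e x y}.
Proof. by case=> i [] j //=; rewrite leq_sub2lE // ltnS. Qed.

Lemma half_graph_odd_independent_inl S i j :
  odd_independent e S -> inl i \in S -> inl j \in S -> i = j.
Proof.
move=> oS iS jS; apply/eqP; apply: contraT => ij.
have /ord_two_smallest[b1 [b2 [b12 sm]]] : 1 < #|[set k | inl k \in S]|.
  by apply/card_gt1P; exists i, j; rewrite !inE.
have b2S : inl b2 \in S by move/setP/(_ b2): sm; rewrite !inE eqxx orbT => /andP[].
have b2_out : inr b2 \notin S.
  by apply/negP => /(odd_independent_indep oS b2S); rewrite /= leqnn.
have N_b2 : nbrs_in e (inr b2) S = [set inl b1; inl b2].
  apply/setP => -[k|k]; rewrite !inE ?(inj_eq (@inl_inj _ _)) /=; last by rewrite andbF.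
  by move/setP/(_ k): sm; rewrite !inE.
have := odd_independent_odd oS b2_out.
by rewrite N_b2 cards2 (inj_eq (@inl_inj _ _)) neq_ltn b12 => /(_ isT).
Qed.

Lemma half_graph_odd_independent_inr S i j :
  odd_independent e S -> inr i \in S -> inr j \in S -> i = j.
Proof.
move=> oS iS jS; apply: rev_ord_inj.
have oS' := odd_independent_preimset (can_inj half_graph_flipK) half_graph_flip_mono oS.
by apply: (half_graph_odd_independent_inl oS'); rewrite inE /= rev_ordK.
Qed.

Lemma half_graph_odd_independent_pair (i j : 'I_n) :
  i < j -> odd_independent e [set inr i; inl j].
Proof.
move=> ij; apply/andP; split.
  rewrite /independent; apply/forall_inP => x /set2P[]->; apply/forall_inP => y /set2P[]-> //=;
    by rewrite -ltnNge.
apply/forallP => v; apply/implyP => _.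
suff : #|nbrs_in e v [set inr i; inl j]| <= 1 by case: #|_| => [|[]].
apply/card_le1_eqP => x y /setIdP[/set2P[]-> vx] /setIdP[/set2P[]-> vy] //.
all: by case: v vx vy.
Qed.

Lemma half_graph_odd_independent_classify S :
  odd_independent e S -> 1 < #|S| -> exists i j : 'I_n, i < j /\ S = [set inr i; inl j].
Proof.
move=> oS /card_gt1P[x [y [xS yS xy]]].
have two i j : inr i \in S -> inl j \in S -> exists i j : 'I_n, i < j /\ S = [set inr i; inl j].
  move=> iS jS; exists i, j; split; first by rewrite ltnNge (odd_independent_indep oS jS iS).
  apply/setP => -[k|k]; apply/idP/idP => [kS|/set2P[]-> //]; apply/set2P.
  - by right; rewrite (half_graph_odd_independent_inl oS kS jS).
  - by left; rewrite (half_graph_odd_independent_inr oS kS iS).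
case: x y xS yS xy => [x|x] [y|y] xS yS xy.
- by rewrite (half_graph_odd_independent_inl oS xS yS) eqxx in xy.
- exact: two yS xS.
- exact: two xS yS.
- by rewrite (half_graph_odd_independent_inr oS xS yS) eqxx in xy.
Qed.

End HalfGraph.

Theorem proposition11 (n : nat) (hn : (2 <= n)%N) :
  chi_so (half_graph_rel n) = n.+1 /\
  alpha_od (half_graph_rel n) = 2 /\
  (forall S : {set (sum 'I_n 'I_n)},
     odd_independent (half_graph_rel n) S -> (2 <= #|S|)%N ->
     exists i j : 'I_n, (i < j)%N /\ S = [set inr i; inl j]).
Proof.
have n_gt0 : 0 < n := ltnW hn.
have classify := @half_graph_odd_independent_classify n.
split; first exact: half_graph_chi_so.
split; last exact: classify.
apply: alpha_od_eq.
  exists [set inr (Ordinal n_gt0); inl (Ordinal hn)]; last by rewrite cards2.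
  exact: half_graph_odd_independent_pair.
move=> S oS; case: (leqP 2 #|S|) => [/(classify S oS)[i [j [_ ->]]]|/ltnW //].
by rewrite cards2.
Qed.
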